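(* Let $a_1,\dots,a_n\in\overline K$ ($n\ge2$) be pairwise distinct and $\mu=(\mu_1,\dots,\mu_n)$ positive integers. Let $A_\mu$ be the generalized magic matrix of the bouquet with multiplicities $\prod_i(y-a_i)^{\mu_i}$ and $(\mathcal R,\gamma)$ the tree associated with the underlying bouquet $(a_1,\dots,a_n)$. Then $A_\mu=\sum_{T\in\mathcal R}\gamma(T)A_\mu(T)$.
   Context: $\overline{K}=\bigcup_{d\ge1}\mathbf{C}[[x^{1/d}]][1/x]$ with valuation $\nu$; $m_{i,j}=\nu(a_i-a_j)$. $A_\mu=(\alpha_{i,j})$ with $\alpha_{i,j}=-\mu_im_{i,j}$ for $i\ne j$ and $\alpha_{i,i}=\sum_{k\neq i}\mu_km_{k,i}$. For $T\subset T_0=\{1,\dots,n\}$ with $|T|\ge2$, $A_\mu(T)=(\alpha_{i,j})$ with $\alpha_{i,j}=-\mu_i$ if $i\ne j$ and $\{i,j\}\subset T$, $\alpha_{i,i}=\sum_{k\ne i,k\in T}\mu_k$ if $i\in T$, $0$ otherwise. A ''rameau'' is $T\subset T_0$ with $|T|\ge2$ such that $m_{i,j}>m_{i,k}=m_{j,k}$ for all $i\neq j$ in $T$, $k\notin T$; $\mathcal R$ is the set of rameaux; $\alpha(T)=\inf\{m_{i,j}:i\ne j\in T\}$; $\gamma(T_0)=\alpha(T_0)$ and for $T\ne T_0$, $\gamma(T)=\alpha(T)-\alpha(T')$ with $T'$ the smallest rameau strictly containing $T$. *)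

From HB Require Import structures.
From mathcomp Require Import all_boot all_order all_algebra.
From mathcomp Require Import complex.
From mathcomp Require Import Rstruct.
From Stdlib Require Import ClassicalEpsilon.
Set Implicit Arguments. Unset Strict Implicit. Unset Printing Implicit Defensive.
Import Order.TTheory GRing.Theory Num.Theory.
Local Open Scope ring_scope.

Definition Ccoef : Type := complex Rdefinitions.R.

(* A generalized power series is a function rat -> C giving the coefficient
   of x^q.  It is a Puiseux series, i.e. an element of
   Kbar = \bigcup_{d>=1} C[[x^{1/d}]][1/x], iff there are d >= 1 and N : int
   such that every exponent q with nonzero coefficient is k/d with k >= N. *)
Definition is_puiseux (f : rat -> Ccoef) : Prop :=
  exists d : nat, (0 < d)%N /\ exists N : int,
    forall q : rat, f q != 0 -> exists k : int, N <= k /\ q = k%:~R / d%:R.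

Definition psub (f g : rat -> Ccoef) : rat -> Ccoef := fun q => f q - g q.

(* Valuation nu(f) = least exponent with nonzero coefficient
   (well defined for nonzero Puiseux series; nu(0) = +oo is never used). *)
Definition nu (f : rat -> Ccoef) : rat :=
  epsilon (inhabits 0)
    (fun q => f q != 0 /\ forall r : rat, r < q -> f r = 0).

Section Magic.
Variable n : nat.
Variable m : 'I_n -> 'I_n -> rat.
Variable mu : 'I_n -> nat.

Definition magic : 'M[rat]_n :=
  \matrix_(i, j) (if i == j then \sum_(k | k != i) (mu k)%:R * m k i
                  else - (mu i)%:R * m i j).

Definition magicT (T : {set 'I_n}) : 'M[rat]_n :=
  \matrix_(i, j) (if (i \in T) && (j \in T) then
                    (if i == j then \sum_(k in T | k != i) (mu k)%:R
                     else - (mu i)%:R)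
                  else 0).

Definition rameau (T : {set 'I_n}) : bool :=
  (1 < #|T|)%N &&
  [forall i, forall j, forall k,
     [&& i \in T, j \in T, i != j & k \notin T] ==>
       (m i k < m i j) && (m i k == m j k)].

Definition alpha (T : {set 'I_n}) : rat :=
  let s := [seq m p.1 p.2 | p <- enum [pred p : 'I_n * 'I_n |
                                  [&& p.1 \in T, p.2 \in T & p.1 != p.2]]] in
  foldr Num.min (head 0 s) s.

(* smallest rameau strictly containing T (rameaux containing T form a chain,
   so minimal cardinality = minimal for inclusion) *)
Definition parent (T : {set 'I_n}) : {set 'I_n} :=
  [arg min_(S < setT | rameau S && (T \proper S)) #|S|].

Definition gamma (T : {set 'I_n}) : rat :=
  if T == setT then alpha T else alpha T - alpha (parent T).

End Magic.

From HB Require Import structures.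
From mathcomp Require Import all_boot all_order all_algebra.
From mathcomp Require Import complex Rstruct.
From mathcomp Require Import ring.
From Stdlib Require Import ClassicalEpsilon Classical.
From Stdlib Require Import FunctionalExtensionality PropExtensionality.
Import Order.TTheory GRing.Theory Num.Theory.
Local Open Scope ring_scope.
Set Implicit Arguments. Unset Strict Implicit.

(* The valuations m i j = nu (a_i - a_j) form a symmetric
   ultrametric on {1..n}.  For such an ultrametric the rameaux form a laminar
   family containing the whole set, and for i <> j the rameaux containing both
   i and j form a chain whose smallest member is the ball
   {k | k = i \/ m i j <= m i k}, with alpha equal to m i j.  The values gamma
   telescope along that chain, so the sum of gamma T over the rameaux T
   containing i and j is m i j.  Comparing entries, both off-diagonal and
   diagonal entries of sum_T gamma(T) A_mu(T) then reduce to this identity. *)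

Definition is_valuation (h : rat -> Ccoef) (q : rat) : Prop :=
  h q != 0 /\ forall r, r < q -> h r = 0.

Lemma nuE h q : is_valuation h q -> nu h = q.
Proof.
move=> [hq hq_min].
have [hnu hnu_min] := epsilon_spec (inhabits 0) (is_valuation h)
                                   (ex_intro _ q (conj hq hq_min)).
rewrite -/(nu h) in hnu hnu_min *.
case: (ltgtP q (nu h)) => // [lt_q_nu | lt_nu_q].
- by move: hq; rewrite hnu_min // eqxx.
- by move: hnu; rewrite hq_min // eqxx.
Qed.

Lemma nu_opp h : nu (fun q => - h q) = nu h.
Proof.
rewrite /nu; congr epsilon; apply: functional_extensionality => q.
apply: propositional_extensionality; rewrite oppr_eq0.
split=> [] [hq hq_min]; split=> // r /hq_min; first by move/eqP; rewrite oppr_eq0 => /eqP.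
by move=> ->; rewrite oppr0.
Qed.

Lemma nu_psubC f g : nu (psub f g) = nu (psub g f).
Proof.
rewrite -nu_opp; congr nu; apply: functional_extensionality => q.
by rewrite /psub opprB.
Qed.

Lemma is_puiseux_psub f g : is_puiseux f -> is_puiseux g -> is_puiseux (psub f g).
Proof.
move=> [d1 [d1_gt0 [N1 Hf]]] [d2 [d2_gt0 [N2 Hg]]].
have d1_neq0 : (d1%:R : rat) != 0 by rewrite pnatr_eq0 -lt0n.
have d2_neq0 : (d2%:R : rat) != 0 by rewrite pnatr_eq0 -lt0n.
exists (d1 * d2)%N; split; first by rewrite muln_gt0 d1_gt0.
exists (Num.min (N1 * d2%:Z) (N2 * d1%:Z)) => q fgq.
have [fq|fq] := eqVneq (f q) 0.
  have gq : g q != 0 by apply: contraNneq fgq => gq; rewrite /psub fq gq subr0.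
  have [k [N2k ->]] := Hg q gq.
  exists (k * d1%:Z); split; first by rewrite ge_min ler_wpM2r ?orbT.
  by rewrite intrM natrM -[(d1%:Z)%:~R]/(d1%:R : rat); field; rewrite d1_neq0 d2_neq0.
have [k [N1k ->]] := Hf q fq.
exists (k * d2%:Z); split; first by rewrite ge_min ler_wpM2r.
by rewrite intrM natrM -[(d2%:Z)%:~R]/(d2%:R : rat); field; rewrite d1_neq0 d2_neq0.
Qed.

(* The support of a Puiseux series lies in (N + nat) / d, so a least exponent
   is found by [ex_minn] on the numerators. *)
Lemma puiseux_valuation f : is_puiseux f -> (exists q, f q != 0) ->
  exists q, is_valuation f q.
Proof.
move=> [d [d_gt0 [N Hf]]] [q0 fq0].
pose e (t : nat) : rat := (N + t%:Z)%:~R / d%:R.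
have supp_e q : f q != 0 -> exists2 t, f (e t) != 0 & q = e t.
  move=> fq; have [k [Nk Eq]] := Hf q fq.
  have Ek : N + (absz (k - N))%:Z = k by rewrite gez0_abs ?subr_ge0 // subrKC.
  by exists (absz (k - N)); rewrite /e Ek -Eq.
have e_mono t t' : (t <= t')%N -> e t <= e t'.
  by move=> le_tt'; rewrite ler_wpM2r ?invr_ge0 ?ler0n // ler_int lerD2l.
have [t0 ft0 _] := supp_e q0 fq0.
case: (ex_minnP (ex_intro (fun t => f (e t) != 0) t0 ft0)) => t ft t_min.
exists (e t); split=> // r lt_r; apply/eqP; apply: contraTT lt_r => fr; rewrite -leNgt.
by have [t' ft' ->] := supp_e r fr; exact/e_mono/t_min.
Qed.

Lemma psub_valuation f g : is_puiseux f -> is_puiseux g -> f <> g ->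
  is_valuation (psub f g) (nu (psub f g)).
Proof.
move=> pf pg fg; have [|q hq] := puiseux_valuation (is_puiseux_psub pf pg).
  apply: NNPP => fg0; apply: fg; apply: functional_extensionality => q.
  apply/eqP; rewrite -subr_eq0; apply/negPn/negP => fgq.
  by apply: fg0; exists q.
by rewrite (nuE hq).
Qed.

Lemma valuation_psub_ultra f g h q1 q2 q :
  is_valuation (psub f g) q1 -> is_valuation (psub g h) q2 ->
  is_valuation (psub f h) q -> Num.min q1 q2 <= q.
Proof.
move=> [_ fg_min] [_ gh_min] [fhq _]; rewrite leNgt lt_min.
apply: contra fhq => /andP [lt_q1 lt_q2].
have -> : psub f h q = psub f g q + psub g h q by rewrite /psub addrA subrK.
by rewrite fg_min // gh_min // addr0.
Qed.

Lemma foldr_min_le d (T : orderType d) (x0 x : T) s :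
  x \in s -> (foldr Order.min x0 s <= x)%O.
Proof.
elim: s => //= y s IH; rewrite in_cons ge_min => /orP [/eqP ->|/IH ->].
  by rewrite lexx.
by rewrite orbT.
Qed.

Lemma foldr_min_ge d (T : orderType d) (c x0 : T) s :
  (c <= x0)%O -> {in s, forall x, (c <= x)%O} -> (c <= foldr Order.min x0 s)%O.
Proof.
move=> c_x0; elim: s => //= y s IH Hs.
by rewrite le_min Hs ?mem_head // IH // => x xs; rewrite Hs // in_cons xs orbT.
Qed.

Section Ultrametric.
Variable n : nat.
Variable m : 'I_n -> 'I_n -> rat.
Hypothesis m_sym : forall i j, m i j = m j i.
Hypothesis m_ultra : forall i j k, i != j -> j != k -> i != k ->
  Num.min (m i j) (m j k) <= m i k.
Hypothesis n_gt1 : (1 < n)%N.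

Lemma ultra_isosceles i w z : i != w -> w != z -> i != z ->
  m i z < m i w -> m w z = m i z.
Proof.
move=> iw wz iz lt_z_w; apply/eqP; rewrite eq_le; apply/andP; split.
  by have := m_ultra iw wz iz; rewrite ge_min leNgt lt_z_w.
have wi : w != i by rewrite eq_sym.
by have := m_ultra wi iz wz; rewrite [m w i]m_sym min_r // ltW.
Qed.

Lemma rameau_card T : rameau m T -> (1 < #|T|)%N.
Proof. by case/andP. Qed.

Lemma rameau_sep T i j k : rameau m T -> i \in T -> j \in T -> i != j ->
  k \notin T -> m i k < m i j /\ m i k = m j k.
Proof.
case/andP=> _ /forallP/(_ i)/forallP/(_ j)/forallP/(_ k)/implyP sepT iT jT ij kT.
by have /andP [-> /eqP ->] := sepT (introT and4P (And4 iT jT ij kT)).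
Qed.

Lemma rameau_laminar S S' x : rameau m S -> rameau m S' -> x \in S -> x \in S' ->
  (S \subset S') || (S' \subset S).
Proof.
move=> rS rS' xS xS'; apply/contraT; rewrite negb_or.
case/andP=> /subsetPn [y yS yS'] /subsetPn [z zS' zS].
have xy : x != y by apply: contraNneq yS' => <-.
have xz : x != z by apply: contraNneq zS => <-.
have [lt_z_y _] := rameau_sep rS xS yS xy zS.
have [lt_y_z _] := rameau_sep rS' xS' zS' xz yS'.
by have := lt_trans lt_z_y lt_y_z; rewrite ltxx.
Qed.

Lemma rameau_setT : rameau m setT.
Proof.
rewrite /rameau cardsT card_ord n_gt1.
by apply/forallP=> i; apply/forallP=> j; apply/forallP=> k; rewrite !inE !andbF.
Qed.

Lemma alpha_eq_min (T : {set 'I_n}) c :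
  (forall x y, x \in T -> y \in T -> x != y -> c <= m x y) ->
  (exists x y, [/\ x \in T, y \in T, x != y & m x y = c]) -> alpha m T = c.
Proof.
move=> c_lb [x [y [xT yT xy mxy]]]; rewrite /alpha.
set s := [seq _ | _ <- _].
have c_lb_s : {in s, forall z, c <= z}.
  move=> z /mapP [[x' y']]; rewrite mem_enum inE /= => /and3P [x'T y'T x'y'] ->.
  exact: c_lb.
have c_s : c \in s.
  by rewrite -mxy; apply/mapP; exists (x, y); rewrite // mem_enum inE /= xT yT xy.
apply/eqP; rewrite eq_le foldr_min_le //; apply: foldr_min_ge (c_lb_s).
by case: s c_lb_s c_s => //= z s c_lb_s _; rewrite c_lb_s ?mem_head.
Qed.

Lemma parent_spec T : rameau m T -> T != setT ->
  [/\ rameau m (parent m T), T \proper parent m T &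
      forall S, rameau m S -> T \proper S -> parent m T \subset S].
Proof.
move=> rT nT; rewrite /parent.
case: arg_minnP => [|P /andP [rP TP] P_min]; first by rewrite rameau_setT properT.
split=> // S rS TS.
have [x xT] : exists x, x \in T.
  by apply/set0Pn; rewrite -card_gt0 ltnW // rameau_card.
have xS := subsetP (proper_sub TS) x xT; have xP := subsetP (proper_sub TP) x xT.
case/orP: (rameau_laminar rS rP xS xP) => // SP.
suff -> : P = S by [].
by apply/eqP; rewrite eq_sym eqEcard SP P_min ?rS.
Qed.

(* The rameaux containing a rameau T form the chain T, parent T, ..., setT,
   along which gamma telescopes. *)
Lemma sum_gamma_supset T : rameau m T ->
  \sum_(S | rameau m S && (T \subset S)) gamma m S = alpha m T.
Proof.
have [k] := ubnP #|~: T|; elim: k T => // k IH T ltTk rT.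
rewrite (bigD1 T) /=; last by rewrite rT subxx.
have [->|nT] := eqVneq T setT.
  rewrite /gamma eqxx big1 ?addr0 // => S /andP [/andP [_]].
  by rewrite subTset => /eqP ->; rewrite eqxx.
have [rP TP P_min] := parent_spec rT nT.
have -> : \sum_(S | rameau m S && (T \subset S) && (S != T)) gamma m S =
          \sum_(S | rameau m S && (parent m T \subset S)) gamma m S.
  apply: eq_bigl => S; apply/andP/andP => [[/andP [rS TS] ST]|[rS PS]].
    by split=> //; apply: P_min; rewrite // properEneq eq_sym ST.
  split; first by rewrite rS (subset_trans (proper_sub TP) PS).
  by apply: contraTneq (proper_sub_trans TP PS) => <-; rewrite properxx.
rewrite IH //; first by rewrite {1}/gamma (negbTE nT) subrK.
by rewrite -ltnS (leq_trans _ ltTk) // ltnS proper_card // properC.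
Qed.

Section Ball.
Variables i j : 'I_n.
Hypothesis ij : i != j.

Definition ball := [set k | (k == i) || (m i j <= m i k)].

Lemma ball_l : i \in ball. Proof. by rewrite inE eqxx. Qed.
Lemma ball_r : j \in ball. Proof. by rewrite inE lexx orbT. Qed.

Lemma ball_le_m x y : x \in ball -> y \in ball -> x != y -> m i j <= m x y.
Proof.
rewrite !inE => xB yB xy.
have [x_i | xi] := eqVneq x i.
  by rewrite x_i in xy *; move: yB; rewrite eq_sym (negbTE xy).
have [y_i | yi] := eqVneq y i.
  by rewrite y_i [m x i]m_sym; move: xB; rewrite (negbTE xi).
rewrite (negbTE xi) /= in xB; rewrite (negbTE yi) /= in yB.
apply: le_trans (m_ultra xi _ xy); last by rewrite eq_sym.
by rewrite le_min [m x i]m_sym xB.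
Qed.

Lemma ball_rameau : rameau m ball.
Proof.
apply/andP; split.
  rewrite (cardD1 i) ball_l add1n ltnS; apply/card_gt0P; exists j.
  by rewrite inE /= ball_r eq_sym ij.
apply/forallP=> x; apply/forallP=> y; apply/forallP=> z; apply/implyP.
case/and4P=> xB yB xy zB.
have zi : z != i by apply: contraNneq zB => ->; exact: ball_l.
have lt_z_j : m i z < m i j by move: zB; rewrite inE (negbTE zi) -ltNge.
have m_ball_z w : w \in ball -> m w z = m i z.
  move=> wB; have [-> // | wi] := eqVneq w i.
  have wz : w != z by apply: contraNneq zB => <-.
  have lt_z_w : m i z < m i w.
    by apply: lt_le_trans lt_z_j (ball_le_m ball_l wB _); rewrite eq_sym.
  by apply: ultra_isosceles lt_z_w; rewrite // eq_sym.
rewrite (m_ball_z x xB) (m_ball_z y yB) eqxx andbT.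
exact: lt_le_trans lt_z_j (ball_le_m xB yB xy).
Qed.

Lemma ball_sub_rameau (T : {set 'I_n}) :
  rameau m T -> i \in T -> j \in T -> ball \subset T.
Proof.
move=> rT iT jT; apply/subsetP => k; rewrite inE; apply: contraTT => kT.
have [lt_k_j _] := rameau_sep rT iT jT ij kT.
by rewrite negb_or -ltNge lt_k_j andbT; apply: contraNneq kT => ->.
Qed.

Lemma alpha_ball : alpha m ball = m i j.
Proof.
by apply: alpha_eq_min; [exact: ball_le_m | exists i, j; rewrite ball_l ball_r ij].
Qed.

Lemma sum_gamma_pair :
  \sum_(T | [&& rameau m T, i \in T & j \in T]) gamma m T = m i j.
Proof.
rewrite -alpha_ball -sum_gamma_supset; last exact: ball_rameau.
apply: eq_bigl => T; apply/and3P/andP => [[rT iT jT]|[rT BT]].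
  by rewrite rT ball_sub_rameau.
by rewrite rT (subsetP BT _ ball_l) (subsetP BT _ ball_r).
Qed.

End Ball.

Lemma magic_decomp (mu : 'I_n -> nat) :
  magic m mu = \sum_(T : {set 'I_n} | rameau m T) gamma m T *: magicT mu T.
Proof.
apply/matrixP => i j; rewrite summxE !mxE.
rewrite (eq_bigr (fun T => gamma m T * magicT mu T i j)) => [|T _]; last first.
  by rewrite mxE.
rewrite /magicT; under eq_bigr do rewrite mxE.
have [<- | ij] := eqVneq i j; last first.
  under eq_bigr => T _ do rewrite (fun_if (fun x => gamma m T * x)) mulr0.
  by rewrite -big_mkcondr -mulr_suml sum_gamma_pair // mulrC.
under eq_bigr => T _ do
  rewrite andbb (fun_if (fun x => gamma m T * x)) mulr0 mulr_sumr big_mkcondl.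
rewrite -big_mkcondr exchange_big /=; apply: eq_bigr => k ki.
rewrite -big_mkcondr -mulr_suml -(eq_bigl _ _ (fun T => andbA _ _ _)).
by rewrite sum_gamma_pair 1?eq_sym // mulrC m_sym.
Qed.

End Ultrametric.

Theorem mainTheorem9 (n : nat) (a : 'I_n -> rat -> Ccoef) (mu : 'I_n -> nat) :
  (2 <= n)%N ->
  (forall i, is_puiseux (a i)) ->
  (forall i j, i != j -> a i <> a j) ->
  (forall i, (0 < mu i)%N) ->
  let m := fun i j => nu (psub (a i) (a j)) in
  magic m mu = \sum_(T : {set 'I_n} | rameau m T) gamma m T *: magicT mu T.
Proof.
move=> n_gt1 a_puiseux a_inj _ m.
have m_val i j : i != j -> is_valuation (psub (a i) (a j)) (m i j).
  by move=> ij; apply: psub_valuation; [exact: a_puiseux.. | exact: a_inj].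
have m_sym i j : m i j = m j i by exact: nu_psubC.
have m_ultra i j k : i != j -> j != k -> i != k -> Num.min (m i j) (m j k) <= m i k.
  move=> ij jk ik.
  exact: valuation_psub_ultra (m_val i j ij) (m_val j k jk) (m_val i k ik).
exact: magic_decomp m_sym m_ultra n_gt1 mu.
Qed.
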